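(* Let $G$ be a group with identity $e$ and let $\mathcal I\subseteq G$ be a set of involutions ($i^2=e$ for $i\in\mathcal I$) such that $G=\langle \mathcal I\rangle$ and for every $a,b\in\mathcal I$ there exists $t\in G$ with $t^2=ab$. Let $H$ be an arbitrary abelian group. If $f:G\to H$ satisfies $f(xy)+f(xy^{-1})=2f(x)$ for all $x,y\in G$ and $f(e)=0$, then $f$ is a group homomorphism and also satisfies $f(xy)+f(x^{-1}y)=2f(y)$ for all $x,y\in G$. Consequently, $S_1(G,H)=S_{1,2}(G,H)=\mathrm{Hom}(G,H)\cong \mathrm{Hom}(G/[G,G],H)$.
   Context: $H$ is written additively. $S_1(G,H)$ denotes the set of functions $f:G\to H$ with $f(e)=0$ satisfying (J1): $f(xy)+f(xy^{-1})=2f(x)$ for all $x,y\in G$; $S_2(G,H)$ is the set of such normalized functions satisfying (J2): $f(xy)+f(x^{-1}y)=2f(y)$ for all $x,y\in G$; and $S_{1,2}(G,H)=S_1(G,H)\cap S_2(G,H)$. $[G,G]$ is the commutator subgroup, so $G/[G,G]$ is the abelianization. *)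

From HB Require Import structures.
From mathcomp Require Import all_boot all_algebra.
From mathcomp Require Import monoid.
Set Implicit Arguments. Unset Strict Implicit. Unset Printing Implicit Defensive.
Import GRing.Theory.
Local Open Scope ring_scope.

Definition is_subgroup (G : groupType) (S : G -> Prop) : Prop :=
  [/\ S 1%g, (forall x y, S x -> S y -> S (x * y)%g) & (forall x, S x -> S (x^-1)%g)].

Definition gen_by (G : groupType) (A : G -> Prop) (x : G) : Prop :=
  forall S : G -> Prop, is_subgroup S -> (forall a, A a -> S a) -> S x.

Definition comm_subgroup (G : groupType) : G -> Prop :=
  gen_by (fun c : G => exists x y : G, c = (x^-1 * y^-1 * x * y)%g).

Definition S1 (G : groupType) (H : zmodType) (f : G -> H) : Prop :=
  f 1%g = 0 /\ forall x y : G, f (x * y)%g + f (x * y^-1)%g = (f x *+ 2)%R.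

Definition S2 (G : groupType) (H : zmodType) (f : G -> H) : Prop :=
  f 1%g = 0 /\ forall x y : G, f (x * y)%g + f (x^-1 * y)%g = (f y *+ 2)%R.

Definition S12 (G : groupType) (H : zmodType) (f : G -> H) : Prop :=
  S1 f /\ S2 f.

Definition is_hom (G : groupType) (H : zmodType) (f : G -> H) : Prop :=
  forall x y : G, f (x * y)%g = f x + f y.

From HB Require Import structures.
From mathcomp Require Import all_boot all_algebra.
From mathcomp Require Import monoid.
Import GRing.Theory.

Set Implicit Arguments.
Unset Strict Implicit.

(* A solution f of (J1) satisfies f (y z y) = 2 f y + f z, so involutions act
   trivially by conjugation and f is a class function.  The elements y with
   f (y z) = f y + f z for all z form a subgroup A, normal because f is a class
   function, and containing all squares.  For an involution a, A U Aa is then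
   a subgroup containing every generator b (as b a is a square), hence all of
   G; in either case f (a z) = f a + f z follows, so A contains the generators
   and f is additive. *)

Local Open Scope ring_scope.
Local Open Scope group_scope.

Section Generation.

Variables (G : groupType) (I : G -> Prop).
Hypothesis I_gen : forall x : G, gen_by I x.

Lemma gen_by_ind (S : G -> Prop) :
  is_subgroup S -> (forall a, I a -> S a) -> forall x, S x.
Proof. by move=> S_sub S_I x; apply: I_gen. Qed.

End Generation.

Lemma subgroup_adjoin (G : groupType) (P : G -> Prop) (a : G) :
  is_subgroup P -> (forall x g, P x -> P (x ^ g)) -> P (a * a) ->
  is_subgroup (fun x => P x \/ P (x * a)).
Proof.
move=> [P1 PM PV] PJ Paa.
have PaV : P (a^-1 * a^-1) by rewrite -invgM; apply: PV.
split; first by left.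
- move=> x y [Px | Pxa] [Py | Pya].
  + by left; apply: (PM).
  + by right; rewrite -mulgA; apply: (PM).
  + right; have -> : x * y * a = (x * a) * y ^ a by rewrite conjgE !gnorm.
    by apply: (PM) => //; apply: (PJ).
  + left; have -> : x * y = (x * a) * ((y * a) ^ a * (a^-1 * a^-1)).
      by rewrite conjgE !gnorm.
    by apply: (PM) => //; apply: (PM) => //; apply: (PJ).
- move=> x [Px | Pxa]; first by left; apply: PV.
  right; have -> : x^-1 * a = (x * a)^-1 ^ a^-1 * (a * a).
    by rewrite conjgE !gnorm.
  by apply: (PM) => //; apply/PJ/PV.
Qed.

Section AdditivePoints.

Variables (G : groupType) (H : zmodType) (f : G -> H).

Definition additive_at (y : G) : Prop := forall z, f (y * z) = f y + f z.

Definition conj_invariant : Prop := forall x y : G, f (x ^ y) = f x.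

Lemma additive_at_subgroup : f 1 = 0 -> is_subgroup additive_at.
Proof.
move=> f1; split.
- by move=> z; rewrite mul1g f1 add0r.
- by move=> x y Ax Ay z; rewrite -mulgA !Ax Ay addrA.
- move=> x Ax z; have fV : f x^-1 = - f x.
    by apply/eqP; rewrite -addr_eq0 addrC -Ax mulgV f1.
  by have := Ax (x^-1 * z); rewrite mulVKg fV => ->; rewrite addKr.
Qed.

Lemma conj_invariant_mulC : conj_invariant -> forall x y, f (x * y) = f (y * x).
Proof. by move=> fJ x y; rewrite -(fJ _ x) conjgE -mulgA mulKg. Qed.

Lemma additive_atJ : conj_invariant ->
  forall y g, additive_at y -> additive_at (y ^ g).
Proof.
move=> fJ y g Ay z; rewrite fJ -(fJ _ g^-1).
have -> : (y ^ g * z) ^ g^-1 = y * z ^ g^-1 by rewrite !conjgE !gnorm.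
by rewrite Ay fJ.
Qed.

End AdditivePoints.

Lemma conj_invariant_subgroup (G : groupType) (T : Type) (f : G -> T) :
  is_subgroup (fun y => forall x, f (x ^ y) = f x).
Proof.
split.
- by move=> x; rewrite conjg1.
- by move=> y g fy fg x; rewrite conjgM fg fy.
- by move=> y fy x; rewrite -{2}(conjgKV y x) fy.
Qed.

Section J1Solutions.

Variables (G : groupType) (H : zmodType) (f : G -> H).
Hypothesis f_S1 : S1 f.

Lemma S1_invg y : f y^-1 = - f y.
Proof.
case: f_S1 => f1 J; apply/eqP; rewrite -addr_eq0 addrC.
by have := J 1 y; rewrite !mul1g f1 mul0rn => ->.
Qed.

Lemma S1_sandwich y z : f (y * z * y) = f y *+ 2 + f z.
Proof.
case: f_S1 => _ J; have := J y^-1 (y * z).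
rewrite mulKg -invgM !S1_invg mulNrn => E.
by rewrite -[f y *+ 2]opprK -E opprB subrK.
Qed.

Lemma S1_sqrg t : f (t * t) = f t *+ 2.
Proof. by have := S1_sandwich t 1; rewrite mulg1 (proj1 f_S1) addr0. Qed.

Lemma S1_involution_2torsion a : a * a = 1 -> f a *+ 2 = 0.
Proof. by move=> aa; rewrite -S1_sqrg aa (proj1 f_S1). Qed.

End J1Solutions.

Section InvolutionGenerated.

Variables (G : groupType) (H : zmodType) (I : G -> Prop).
Hypothesis I_invol : forall i, I i -> i * i = 1.
Hypothesis I_gen : forall x : G, gen_by I x.
Hypothesis I_sqr : forall a b, I a -> I b -> exists t : G, t * t = a * b.

Variable f : G -> H.
Hypothesis f_S1 : S1 f.

Lemma S1_conj_invariant : conj_invariant f.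
Proof.
move=> x y; move: x; apply: (gen_by_ind I_gen (conj_invariant_subgroup f)).
move=> a Ia x; rewrite conjgE (mulg1_eq (I_invol Ia)) mulgA.
by rewrite S1_sandwich // S1_involution_2torsion ?I_invol // add0r.
Qed.

Lemma S1_additive_at_sqr t : additive_at f (t * t).
Proof.
move=> z; rewrite -mulgA (conj_invariant_mulC S1_conj_invariant t).
by rewrite S1_sandwich // S1_sqrg.
Qed.

Lemma S1_additive_at_involution a : I a -> additive_at f a.
Proof.
move=> Ia; have fJ := S1_conj_invariant.
have cover : forall x, additive_at f x \/ additive_at f (x * a).
  apply: (gen_by_ind I_gen (subgroup_adjoin _ _ _)).
  - exact: additive_at_subgroup (proj1 f_S1).
  - by move=> x g; apply: additive_atJ.
  - exact: S1_additive_at_sqr.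
  - move=> b Ib; right; have [t <-] := I_sqr Ib Ia.
    exact: S1_additive_at_sqr.
move=> z; rewrite (conj_invariant_mulC fJ).
case: (cover z) => [Az | Aza]; first by rewrite Az addrC.
have := Aza a; rewrite -mulgA I_invol // mulg1 => ->.
by rewrite addrCA -mulr2n S1_involution_2torsion ?I_invol // addr0.
Qed.

Lemma S1_is_hom : is_hom f.
Proof.
move=> x y; apply: (gen_by_ind I_gen (additive_at_subgroup (proj1 f_S1))).
exact: S1_additive_at_involution.
Qed.

End InvolutionGenerated.

Section Homomorphisms.

Variables (G : groupType) (H : zmodType) (f : G -> H).
Hypothesis f_hom : is_hom f.

Lemma hom1g : f 1 = 0.
Proof. by apply: (addrI (f 1)); rewrite addr0 -f_hom mulg1. Qed.

Lemma hom_invg x : f x^-1 = - f x.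
Proof. by apply/eqP; rewrite -addr_eq0 addrC -f_hom mulgV hom1g. Qed.

Lemma hom_S1 : S1 f.
Proof.
split=> [|x y]; first exact: hom1g.
by rewrite !f_hom hom_invg addrACA subrr addr0 mulr2n.
Qed.

Lemma hom_S2 : S2 f.
Proof.
split=> [|x y]; first exact: hom1g.
by rewrite !f_hom hom_invg addrACA addrN add0r mulr2n.
Qed.

Lemma hom_comm_subgroup x : comm_subgroup x -> f x = 0.
Proof.
move=> x_comm; apply: (x_comm (fun y => f y = 0)) => [|c [u [v ->]]].
  split=> [|y z fy fz|y fy]; first exact: hom1g.
  - by rewrite f_hom fy fz addr0.
  - by rewrite hom_invg fy oppr0.
by rewrite !f_hom !hom_invg addrAC subrK addNr.
Qed.

End Homomorphisms.

Theorem mainTheorem5 (G : groupType) (H : zmodType) (I : G -> Prop)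
  (Iinv : forall i, I i -> (i * i)%g = 1%g)
  (Igen : forall x : G, gen_by I x)
  (Isq : forall a b, I a -> I b -> exists t : G, (t * t)%g = (a * b)%g) :
  (forall f : G -> H, S1 f -> is_hom f /\ S2 f) /\
  (forall f : G -> H, S1 f <-> S12 f) /\
  (forall f : G -> H, S12 f <-> is_hom f) /\
  (forall f : G -> H, is_hom f -> forall x, comm_subgroup x -> f x = 0%R).
Proof.
have S1_hom (f : G -> H) : S1 f -> is_hom f := S1_is_hom Iinv Igen Isq (f := f).
split; first by move=> f /S1_hom f_hom; split; last exact: hom_S2.
split.
  by move=> f; split=> [f_S1 | []//]; split; last exact/hom_S2/S1_hom.
split.
  move=> f; split=> [[/S1_hom] // | f_hom].
  by split; [exact: hom_S1 | exact: hom_S2].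
exact: hom_comm_subgroup.
Qed.
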